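(* Let $a,b,n$ be positive integers with $a\le b$. If a $(b,a,n)$ strategy exists, then a $(b,\lfloor b/a\rfloor\cdot n)$ strategy for the GKS game exists.
   Context: The GKS game with parameter $n$ (a positive integer). A strategy pair $(S,T)$ consists of a function $S$ assigning a bit in $\{0,1\}$ to every sequence $\pi_1\pi_2\ldots\pi_i$ of distinct elements of $[n]=\{1,\dots,n\}$ with $1\le i\le n-1$, and a function $T:\{0,1\}^n\to 2^{[n]}$. For a permutation $\pi=\pi_1\ldots\pi_n$ of $[n]$ and a bit $b$, the final array $A_{\rm final}\in\{0,1\}^n$ is defined by $A_{\rm final}[\pi_i]=S(\pi_1\ldots\pi_i)$ for $1\le i\le n-1$ and $A_{\rm final}[\pi_n]=b$. The pair $(S,T)$ is a $(k,n)$ strategy if for every permutation $\pi$ of $[n]$ and every bit $b$ we have $\pi_n\in T(A_{\rm final})$, and moreover $|T(\sigma)|\le k$ for every $\sigma\in\{0,1\}^n$. A $(k,k_A,n)$ strategy is a $(k,n)$ strategy $(S,T)$ in which $S$ is additionally defined on all full permutations $\pi_1\ldots\pi_n$ of $[n]$ (''Alice-mode''), such that, letting $\mathcal{O}_A$ be the set of all arrays $A\in\{0,1\}^n$ with $A[\pi_i]=S(\pi_1\ldots\pi_i)$ for all $1\le i\le n$, for some permutation $\pi$ of $[n]$, we have $|T(\sigma)|\le k_A$ for every $\sigma\in\mathcal{O}_A$. *)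

From mathcomp Require Import all_boot.
Set Implicit Arguments. Unset Strict Implicit. Unset Printing Implicit Defensive.

(* A sequence pi_1 ... pi_i of distinct elements is a
   seq 'I_n; a permutation pi of [n] is a seq s with perm_eq s (enum 'I_n).
   S : seq 'I_n -> bool is total; only its values on sequences of distinct
   elements of length 1..n-1 (resp. 1..n in Alice-mode) matter. *)

Definition gks_S n := seq 'I_n -> bool.
Definition gks_T n := {ffun 'I_n -> bool} -> {set 'I_n}.

(* A_final[pi_i] = S(pi_1..pi_i) for i <= n-1, A_final[pi_n] = b.
   For x = pi_{j+1} (j = index x s, 0-based), the prefix is take (j+1) s. *)
Definition final_array n (S : gks_S n) (s : seq 'I_n) (b : bool)
  : {ffun 'I_n -> bool} :=
  [ffun x => if (index x s).+1 < size s then S (take (index x s).+1 s) else b].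

Definition alice_array n (S : gks_S n) (s : seq 'I_n) : {ffun 'I_n -> bool} :=
  [ffun x => S (take (index x s).+1 s)].

(* (k,n) strategy.  The permutation is written y :: s' so that pi_n = last y s'. *)
Definition kn_strategy (k n : nat) (S : gks_S n) (T : gks_T n) : Prop :=
  (forall (y : 'I_n) (s' : seq 'I_n) (b : bool),
      perm_eq (y :: s') (enum 'I_n) ->
      last y s' \in T (final_array S (y :: s') b))
  /\ (forall sigma : {ffun 'I_n -> bool}, #|T sigma| <= k).

Definition kkAn_strategy (k kA n : nat) (S : gks_S n) (T : gks_T n) : Prop :=
  kn_strategy k S T /\
  (forall s : seq 'I_n, perm_eq s (enum 'I_n) ->
      #|T (alice_array S s)| <= kA).

From mathcomp Require Import all_boot.
Set Implicit Arguments. Unset Strict Implicit. Unset Printing Implicit Defensive.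

(* Play q = b/a independent copies of the n-game on q blocks of n cells.  A
   cell is answered by the given strategy run on the subsequence of its own
   block.  When the last cell arrives, every other block has been completely
   played, i.e. it was played in Alice-mode, so its T-set has at most a
   elements.  Hence either some block has a T-set with more than a elements, and
   then it is the block of the last cell and its T-set (at most b elements)
   contains that cell; or all T-sets are small and their union has at most
   q a <= b elements. *)

Lemma card_bigcup_leq (T : finType) q (F : 'I_q -> {set T}) :
  #|\bigcup_(g < q) F g| <= \sum_(g < q) #|F g|.
Proof.
apply: (big_ind2 (fun (U : {set T}) s => #|U| <= s)) => [|U1 s1 U2 s2 h1 h2|//].
- by rewrite cards0.
- exact: leq_trans (leq_card_setU U1 U2) (leq_add h1 h2).
Qed.

Lemma take_index_cat_cons (T : eqType) (x : T) l l' : x \notin l ->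
  take (index x (l ++ x :: l')).+1 (l ++ x :: l') = rcons l x.
Proof.
move=> xNl; rewrite index_cat (negbTE xNl) /= eqxx addn0 take_cat ltnNge leqnSn.
by rewrite subSnn /= take0 cats1.
Qed.

Lemma take_index_succ (T : eqType) (x : T) s : x \in s ->
  take (index x s).+1 s = rcons (take (index x s) s) x.
Proof. by move=> xs; rewrite (take_nth x) ?index_mem // nth_index. Qed.

Lemma index_lt_size_rcons (T : eqType) (t : seq T) w x : uniq (rcons t w) ->
  x \in rcons t w -> ((index x (rcons t w)).+1 < size (rcons t w)) = (x != w).
Proof.
rewrite -cats1 cat_uniq /= andbT orbF mem_cat inE => /andP [_ wNt] /orP [xt|/eqP ->].
- rewrite index_cat xt size_cat addn1 ltnS index_mem xt.
  by apply/esym; apply: contraNneq wNt => <-.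
- by rewrite index_cat (negbTE wNt) size_cat /= eqxx addn0 addn1 ltnn.
Qed.

Lemma kn_strategy_rcons k n (S : gks_S n) (T : gks_T n) t z b :
  kn_strategy k S T -> perm_eq (rcons t z) (enum 'I_n) ->
  z \in T (final_array S (rcons t z) b).
Proof.
case=> correct _; case: t => [|y t] /=; first exact: correct.
by have := correct y (rcons t z) b; rewrite last_rcons.
Qed.

Section BlockStrategy.
Variables (n' q : nat).
Local Notation n := n'.+1.
Local Notation m := (q * n).

Lemma block_subproof (x : 'I_m) : x %/ n < q.
Proof. by rewrite ltn_divLR. Qed.

Definition block (x : 'I_m) : 'I_q := Ordinal (block_subproof x).
Definition offset (x : 'I_m) : 'I_n := inord (x %% n).

Lemma embed_subproof (g : 'I_q) (j : 'I_n) : g * n + j < m.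
Proof. by apply: leq_trans (_ : _ <= g * n + n) _; rewrite ?ltn_add2l // -mulSnr leq_mul. Qed.

Definition embed (g : 'I_q) (j : 'I_n) : 'I_m := Ordinal (embed_subproof g j).

Definition restrict (g : 'I_q) (s : seq 'I_m) : seq 'I_n :=
  map offset [seq y <- s | block y == g].

Lemma offset_val x : nat_of_ord (offset x) = x %% n.
Proof. by rewrite inordK // ltn_pmod. Qed.

Lemma block_embed g j : block (embed g j) = g.
Proof. by apply: val_inj; rewrite /= divnMDl // divn_small // addn0. Qed.

Lemma offset_embed g j : offset (embed g j) = j.
Proof. by apply: val_inj; rewrite /= offset_val /= modnMDl modn_small. Qed.

Lemma embed_block_offset x : embed (block x) (offset x) = x.
Proof. by apply: val_inj; rewrite /= offset_val /= -divn_eq. Qed.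

Lemma block_offset_inj x y : block x = block y -> offset x = offset y -> x = y.
Proof. by move=> bxy oxy; rewrite -[x]embed_block_offset bxy oxy embed_block_offset. Qed.

Lemma perm_restrict s g : perm_eq s (enum 'I_m) ->
  perm_eq (restrict g s) (enum 'I_n).
Proof.
move=> sP; apply: uniq_perm; rewrite ?enum_uniq //.
- rewrite map_inj_in_uniq ?filter_uniq ?(perm_uniq sP) ?enum_uniq //.
  move=> x y; rewrite !mem_filter => /andP [/eqP xg _] /andP [/eqP yg _].
  by apply: block_offset_inj; rewrite xg yg.
- move=> j; rewrite mem_enum; apply/mapP; exists (embed g j); last first.
    by rewrite offset_embed.
  by rewrite mem_filter block_embed eqxx (perm_mem sP) mem_enum.
Qed.

Lemma restrict_take_index s x : uniq s -> x \in s ->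
  restrict (block x) (take (index x s).+1 s) =
  take (index (offset x) (restrict (block x) s)).+1 (restrict (block x) s).
Proof.
move=> us xs; case/splitPr: xs us => l l'.
rewrite cat_uniq /= negb_or => /and4P [_ /andP [xNl _] _ _].
rewrite take_index_cat_cons // /restrict !filter_cat /= eqxx !map_cat /=.
rewrite take_index_cat_cons ?filter_rcons ?eqxx ?map_rcons //.
apply/mapP => -[y]; rewrite mem_filter => /andP [/eqP yx yl] xy.
by move: xNl; rewrite -(block_offset_inj yx (esym xy)) yl.
Qed.

Lemma restrict_rcons_block t z :
  restrict (block z) (rcons t z) = rcons (restrict (block z) t) (offset z).
Proof. by rewrite /restrict filter_rcons eqxx map_rcons. Qed.

Definition block_S (S : gks_S n) : gks_S m :=
  fun s => if s is y :: s' then S (restrict (block (last y s')) s) else false.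

Lemma block_S_take_index S s x : x \in s ->
  block_S S (take (index x s).+1 s) = S (restrict (block x) (take (index x s).+1 s)).
Proof.
move=> xs; rewrite take_index_succ //.
by case: (take _ s) => [|y t] //=; rewrite last_rcons.
Qed.

Definition local_array (g : 'I_q) (sigma : {ffun 'I_m -> bool}) : {ffun 'I_n -> bool} :=
  [ffun j => sigma (embed g j)].

Definition block_T (T : gks_T n) (a : nat) : gks_T m := fun sigma =>
  if [pick g | a < #|T (local_array g sigma)|] is Some g
  then embed g @: T (local_array g sigma)
  else \bigcup_(g < q) embed g @: T (local_array g sigma).

Lemma card_block_T (T : gks_T n) a b : q * a <= b ->
  (forall sigma, #|T sigma| <= b) -> forall sigma, #|block_T T a sigma| <= b.
Proof.
move=> qab Tb sigma; rewrite /block_T; case: pickP => [g _|small].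
  exact: leq_trans (leq_imset_card _ _) (Tb _).
apply: leq_trans (card_bigcup_leq _) (leq_trans _ qab).
rewrite -[q in q * a]card_ord -sum_nat_const; apply: leq_sum => g _.
by apply: leq_trans (leq_imset_card _ _) _; rewrite leqNgt small.
Qed.

Section LastCell.
Variables (S : gks_S n) (t : seq 'I_m) (z : 'I_m) (b : bool).
Hypothesis tzP : perm_eq (rcons t z) (enum 'I_m).
Local Notation sigma := (final_array (block_S S) (rcons t z) b).

Let tz_uniq : uniq (rcons t z). Proof. by rewrite (perm_uniq tzP) enum_uniq. Qed.
Let tz_mem x : x \in rcons t z. Proof. by rewrite (perm_mem tzP) mem_enum. Qed.

Lemma local_array_embed_neq g j : embed g j != z ->
  local_array g sigma j = S (take (index j (restrict g (rcons t z))).+1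
                                  (restrict g (rcons t z))).
Proof.
move=> jz; rewrite !ffunE index_lt_size_rcons // jz block_S_take_index //.
by rewrite restrict_take_index // block_embed offset_embed.
Qed.

Lemma local_array_alice g : g != block z ->
  local_array g sigma = alice_array S (restrict g (rcons t z)).
Proof.
move=> gz; apply/ffunP => j; rewrite local_array_embed_neq ?ffunE //.
by apply: contraNneq gz => <-; rewrite block_embed.
Qed.

Lemma local_array_final :
  local_array (block z) sigma = final_array S (restrict (block z) (rcons t z)) b.
Proof.
have rP := perm_restrict (block z) tzP; rewrite restrict_rcons_block in rP.
have rU := perm_uniq rP; rewrite enum_uniq in rU.
apply/ffunP => j; rewrite [RHS]ffunE restrict_rcons_block.
rewrite index_lt_size_rcons ?(perm_mem rP) ?mem_enum //.
have [->|jz] := eqVneq j (offset z).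
  by rewrite !ffunE embed_block_offset index_lt_size_rcons // eqxx.
rewrite -restrict_rcons_block local_array_embed_neq //.
by apply: contraNneq jz => <-; rewrite offset_embed.
Qed.

End LastCell.

Lemma block_T_correct (S : gks_S n) (T : gks_T n) a b' t z b :
  kkAn_strategy b' a S T -> perm_eq (rcons t z) (enum 'I_m) ->
  z \in block_T T a (final_array (block_S S) (rcons t z) b).
Proof.
case=> STk alice tzP; set sigma := final_array _ _ _.
have zT : z \in embed (block z) @: T (local_array (block z) sigma).
  apply/imsetP; exists (offset z); rewrite ?embed_block_offset //.
  rewrite local_array_final // restrict_rcons_block.
  by apply: kn_strategy_rcons STk _; rewrite -restrict_rcons_block perm_restrict.
rewrite /block_T; case: pickP => [g|small]; last by apply/bigcupP; exists (block z).
have [-> //|gz] := eqVneq g (block z).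
by rewrite local_array_alice // ltnNge alice // perm_restrict.
Qed.

End BlockStrategy.

Theorem lemma4 (a b n : nat) :
  0 < a -> 0 < b -> 0 < n -> a <= b ->
  (exists (S : gks_S n) (T : gks_T n), kkAn_strategy b a S T) ->
  exists (S : gks_S (b %/ a * n)) (T : gks_T (b %/ a * n)), kn_strategy b S T.
Proof.
case: n => [//|n] a_gt0 _ _ _ [S [T ST]].
exists (block_S S), (block_T T a); split.
- by move=> y s b0; rewrite lastI; apply: block_T_correct ST.
- by apply: card_block_T; [rewrite leq_divM | case: ST => [[_]]].
Qed.
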